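(* Let $G$ be a finite simple graph with at least one edge, of order $n$. Then: (i) there exists a mitigating set $S$ of $G$ such that every connected component of the subgraph of $G$ induced by the edge set $S$ is isomorphic to $P_2$ or $P_3$ (the path on $2$ or $3$ vertices); (ii) $\mathrm{es}_{\Delta}(G)\leq n-\alpha(G)$, where $\alpha(G)$ is the independence number of $G$; moreover this bound is sharp, i.e. there exist graphs for which equality holds.
   Context: For a graph $G$ with maximum degree $\Delta(G)$, a set $S\subseteq E(G)$ is a mitigating set if $\Delta(G-S)\leq \Delta(G)-1$. The $\Delta$-edge stability number $\mathrm{es}_{\Delta}(G)$ is the minimum number of edges of $G$ whose removal results in a subgraph $H$ with $\Delta(H)=\Delta(G)-1$, i.e. the minimum size of a mitigating set. The subgraph induced by a set of edges $S$ consists of the edges of $S$ and their endpoints. *)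

(* A finite simple graph on vertex type T : finType is a
   symmetric irreflexive relation e : rel T. Edges are 2-element vertex sets. *)
From mathcomp Require Import all_boot.
Set Implicit Arguments. Unset Strict Implicit. Unset Printing Implicit Defensive.

Section Graphs.
Variable T : finType.

Definition simple_graph (e : rel T) : Prop := symmetric e /\ irreflexive e.

Definition edges (e : rel T) : {set {set T}} :=
  [set [set x; y] | x in T, y in T & e x y].

Definition deg (e : rel T) (v : T) : nat := #|[set u | e v u]|.
Definition maxdeg (e : rel T) : nat := \max_(v : T) deg e v.

Definition del_edges (e : rel T) (S : {set {set T}}) : rel T :=
  fun x y => e x y && ([set x; y] \notin S).

Definition mitigating (e : rel T) (S : {set {set T}}) : bool :=
  (S \subset edges e) && (maxdeg (del_edges e S) <= (maxdeg e).-1).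

(* Delta-edge stability number: minimum size of a mitigating set
   (E(G) itself is mitigating whenever G has an edge, so the default
   value #|E(G)| is never below the true minimum). *)
Definition es_Delta (e : rel T) : nat :=
  \big[minn/#|edges e|]_(S : {set {set T}} | mitigating e S) #|S|.

Definition independent (e : rel T) (A : {set T}) : bool :=
  [forall x in A, forall y in A, ~~ e x y].
Definition alpha (e : rel T) : nat :=
  \max_(A : {set T} | independent e A) #|A|.

Definition sadj (S : {set {set T}}) : rel T :=
  fun x y => (x != y) && ([set x; y] \in S).
Definition svert (S : {set {set T}}) : {set T} :=
  [set x | [exists y, sadj S x y]].
Definition scomp (S : {set {set T}}) (x : T) : {set T} :=
  [set y | connect (sadj S) x y].
End Graphs.

Definition path_rel (k : nat) : rel 'I_k :=
  fun i j => (i.+1 == j :> nat) || (j.+1 == i :> nat).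

Definition iso_path (T : finType) (S : {set {set T}}) (C : {set T}) (k : nat)
  : Prop :=
  exists f : 'I_k -> T,
    injective f /\ f @: setT = C /\
    (forall i j, sadj S (f i) (f j) = path_rel i j).

(* Let M be the set of vertices of maximum degree Δ. An edge set meeting every
   vertex of M is mitigating. Counting the Δ|A| edges leaving a set A ⊆ M shows
   |N(A)| ≥ |A|, so by Hall's theorem every U ⊆ M has an injective choice of
   neighbours u ↦ f u.
   (i) Take a maximal matching D of G[M]; then U = M \ D is independent, so no
   f u lies in U. The edges u f(u), together with the matching edges not having
   both ends in f(U), cover M; a vertex meeting two of these edges is the centre
   of a cherry whose ends are leaves, so every component is P_2 or P_3.
   (ii) For a maximum independent set A, cover A ∩ M by the edges u f(u), and
   every other vertex of M \ A outside f(A ∩ M) by one arbitrary edge. The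
   edges are charged injectively to f(A ∩ M) ∪ (M \ A \ f(A ∩ M)) ⊆ V \ A,
   and K_2 attains the bound. *)

From mathcomp Require Import all_boot all_order zify.
Set Implicit Arguments. Unset Strict Implicit. Unset Printing Implicit Defensive.
Import Order.TTheory.

Section Hall.
Variables (T : finType) (r : rel T).

Definition nbhd (W A : {set T}) : {set T} := [set y in W | [exists x in A, r x y]].

Definition hall_condition (U W : {set T}) : Prop :=
  forall A : {set T}, A \subset U -> #|A| <= #|nbhd W A|.

Definition saturating (U W : {set T}) (f : T -> T) : Prop :=
  {in U &, injective f} /\ {in U, forall u, r u (f u) /\ f u \in W}.

Lemma saturating_nbhd (U W : {set T}) f : saturating U W f -> saturating U (nbhd W U) f.
Proof.
move=> [fi fU]; split=> // u uU; have [ruf fW] := fU u uU.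
by rewrite ruf inE fW; split=> //; apply/existsP; exists u; rewrite uU.
Qed.

Lemma saturating_setU (A B X Y : {set T}) f g : [disjoint X & Y] ->
  saturating A X f -> saturating B Y g ->
  saturating (A :|: B) (X :|: Y) (fun x => if x \in A then f x else g x).
Proof.
move=> dXY [fi fA] [gi gB]; split=> [x y|x]; rewrite !inE.
- case: (boolP (x \in A)) => xA; case: (boolP (y \in A)) => yA /=.
  + by move=> _ _; apply: fi.
  + move=> _ yB fgxy; have [_ fX] := fA x xA; have [_ gY] := gB y yB.
    by move: (disjointFr dXY fX); rewrite fgxy gY.
  + move=> xB _ gfxy; have [_ gX] := gB x xB; have [_ fY] := fA y yA.
    by move: (disjointFr dXY fY); rewrite -gfxy gX.
  + by move=> xB yB; apply: gi.
- case: (boolP (x \in A)) => xA /=.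
    by have [-> ->] := fA x xA.
  by move=> xB; have [-> ->] := gB x xB; rewrite orbT.
Qed.

Lemma saturating0 W f : saturating set0 W f.
Proof. by split=> [x y|u]; rewrite inE. Qed.

Lemma saturatingS (U W W' : {set T}) f : W \subset W' -> saturating U W f -> saturating U W' f.
Proof.
move=> sWW' [fi fU]; split=> // u uU; have [-> fW] := fU u uU.
by rewrite (subsetP sWW').
Qed.

Lemma hall_condition_tight (U W A : {set T}) : hall_condition U W -> A \subset U ->
  #|nbhd W A| <= #|A| -> hall_condition (U :\: A) (W :\: nbhd W A).
Proof.
move=> hall sAU tight B sBUA.
have dBA : [disjoint B & A].
  by apply: disjointWl sBUA _; rewrite disjoints_subset subsetDr.
have sBAU : B :|: A \subset U by rewrite subUset sAU (subset_trans sBUA) ?subsetDl.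
have nbhdBA : nbhd W (B :|: A) \subset nbhd (W :\: nbhd W A) B :|: nbhd W A.
  apply/subsetP=> y; rewrite [y \in nbhd _ _]inE => /andP [yW /existsP [x /andP [xBA rxy]]].
  rewrite in_setU; case: (boolP (y \in nbhd W A)) => [_|nAy]; first by rewrite orbT.
  rewrite orbF inE in_setD nAy yW /=; apply/existsP; exists x; rewrite rxy andbT.
  case/setUP: xBA => // xA; case/negP: nAy; rewrite inE yW.
  by apply/existsP; exists x; rewrite xA.
have := hall _ sBAU; rewrite cardsU (disjoint_setI0 dBA) cards0 subn0 => h.
have := leq_trans h (leq_trans (subset_leq_card nbhdBA) (leq_card_setU _ _)).
lia.
Qed.

Lemma hall_condition_slack (U W : {set T}) u0 y0 : hall_condition U W ->
  (forall A : {set T}, A \subset U -> A != set0 -> A != U -> #|A| < #|nbhd W A|) ->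
  u0 \in U -> hall_condition (U :\ u0) (W :\ y0).
Proof.
move=> hall slack u0U B sBU.
have [->|B0] := eqVneq B set0; first by rewrite cards0.
have BU : B != U by apply: contraTneq sBU => ->; apply/subsetPn; exists u0; rewrite ?setD11.
have sB : B \subset U := subset_trans sBU (subsetDl _ _).
have nbhdB : nbhd W B \subset y0 |: nbhd (W :\ y0) B.
  by apply/subsetP=> y; rewrite !inE; case: (eqVneq y y0) => //= _.
have := leq_trans (slack B sB B0 BU) (subset_leq_card nbhdB).
rewrite cardsU1 => h; have := leq_b1 (y0 \notin nbhd (W :\ y0) B); lia.
Qed.

Theorem hall_saturating (U W : {set T}) : hall_condition U W -> exists f, saturating U W f.
Proof.
move: {2}#|U| (leqnn #|U|) => n; elim: n U W => [|n IH] U W hU hall.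
  by exists id; move: hU; rewrite leqn0 cards_eq0 => /eqP ->; apply: saturating0.
have [->|[u0 u0U]] := set_0Vmem U; first by exists id; apply: saturating0.
case: (boolP [exists A : {set T}, [&& A \subset U, A != set0, A != U &
                                     #|nbhd W A| <= #|A|]]).
- case/existsP=> A /and4P [sAU A0 AU tight].
  have ltAU : #|A| < #|U| by apply: proper_card; rewrite properEneq AU.
  have [f satf] : exists f, saturating A W f.
    by apply: IH; [lia | move=> B sBA; apply: hall (subset_trans sBA sAU)].
  have [g satg] : exists g, saturating (U :\: A) (W :\: nbhd W A) g.
    apply: IH (hall_condition_tight hall sAU tight).
    by rewrite cardsD (setIidPr sAU); move: A0; rewrite -card_gt0; lia.
  exists (fun x => if x \in A then f x else g x).
  have defU : A :|: U :\: A = U by rewrite -{2}(setID U A) (setIidPr sAU).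
  rewrite -defU; apply: saturatingS (saturating_setU _ (saturating_nbhd satf) satg).
    by rewrite subUset subsetDl andbT; apply/subsetP=> y; rewrite inE => /andP [].
  by rewrite disjoint_sym disjoints_subset subsetDr.
- rewrite negb_exists => /forallP not_tight.
  have slack (A : {set T}) : A \subset U -> A != set0 -> A != U -> #|A| < #|nbhd W A|.
    by move=> sAU A0 AU; move: (not_tight A); rewrite sAU A0 AU /= -ltnNge.
  have [y0 y0N] : exists y0, y0 \in nbhd W [set u0].
    by apply/card_gt0P; apply: leq_trans (hall _ _); rewrite ?cards1 ?sub1set.
  have [g satg] : exists g, saturating (U :\ u0) (W :\ y0) g.
    apply: IH (hall_condition_slack y0 hall slack u0U).
    by move: hU; rewrite (cardsD1 u0 U) u0U; lia.
  have sat0 : saturating [set u0] [set y0] (fun=> y0).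
    split=> [x y /set1P -> /set1P -> //|u /set1P ->]; rewrite set11.
    by move: y0N; rewrite inE => /andP [_ /existsP [x /andP [/set1P -> ->]]].
  exists (fun x => if x \in [set u0] then y0 else g x).
  rewrite -(setD1K u0U); apply: saturatingS (saturating_setU _ sat0 satg).
    by rewrite subUset sub1set subsetDl andbT; case/setIdP: y0N.
  by rewrite disjoints1 !inE eqxx.
Qed.

End Hall.

Definition maxdeg_vertices (T : finType) (e : rel T) : {set T} :=
  [set v | deg e v == maxdeg e].

Section MaxDegree.
Variables (T : finType) (e : rel T).

Lemma deg_le_maxdeg v : deg e v <= maxdeg e.
Proof. exact: (leq_bigmax_cond (F := deg e)). Qed.

Lemma maxdeg_gt0 x y : e x y -> 0 < maxdeg e.
Proof.
by move=> exy; apply: leq_trans (deg_le_maxdeg x); apply/card_gt0P; exists y; rewrite inE.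
Qed.

Lemma mem_edges x y : e x y -> [set x; y] \in edges e.
Proof. by move=> exy; apply: imset2_f; rewrite ?inE. Qed.

Lemma maxdeg_verticesP v : reflect (deg e v = maxdeg e) (v \in maxdeg_vertices e).
Proof. by rewrite inE; apply: eqP. Qed.

Lemma deg_sum v : deg e v = \sum_y e v y.
Proof. by rewrite /deg -sum1dep_card big_mkcond; apply: eq_bigr => y _; case: (e v y). Qed.

Hypothesis e_sym : symmetric e.

Lemma hall_condition_maxdeg (U : {set T}) : 0 < maxdeg e ->
  U \subset maxdeg_vertices e -> hall_condition e U setT.
Proof.
move=> D_gt0 sUM A sAU; rewrite -(leq_pmul2r D_gt0).
have -> : #|A| * maxdeg e = \sum_(a in A) \sum_y e a y.
  rewrite -sum_nat_const; apply: eq_bigr => a aA; rewrite -deg_sum.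
  by have /maxdeg_verticesP -> := subsetP sUM a (subsetP sAU a aA).
rewrite exchange_big /= (bigID (mem (nbhd e setT A))) /= [X in _ + X]big1 ?addn0.
  rewrite -sum_nat_const; apply: leq_sum => y _; apply: leq_trans (deg_le_maxdeg y).
  rewrite deg_sum [X in _ <= X](bigID (mem A)) /=; apply: leq_trans (leq_addr _ _).
  by under eq_bigr do rewrite e_sym.
move=> y yN; apply: big1 => a aA; apply/eqP; rewrite eqb0; apply: contra yN => eay.
by rewrite !inE; apply/existsP; exists a; rewrite aA.
Qed.

Lemma maxdeg_saturating (U : {set T}) : 0 < maxdeg e -> U \subset maxdeg_vertices e ->
  exists f, {in U &, injective f} /\ {in U, forall u, e u (f u)}.
Proof.
move=> D_gt0 sUM; have [f [fi fU]] := hall_saturating (hall_condition_maxdeg D_gt0 sUM).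
by exists f; split=> // u /fU [].
Qed.
End MaxDegree.

Section Mitigating.
Variables (T : finType) (e : rel T).

Lemma mitigating_cover (S : {set {set T}}) : S \subset edges e ->
  {in maxdeg_vertices e, forall m, exists2 y, e m y & [set m; y] \in S} ->
  mitigating e S.
Proof.
move=> sSE cover; rewrite /mitigating sSE; apply/bigmax_leqP => v _.
have sub : [set u | del_edges e S v u] \subset [set u | e v u].
  by apply/subsetP=> u; rewrite !inE => /andP [].
have [degv|ltv] := eqVneq (deg e v) (maxdeg e); last first.
  have := subset_leq_card sub; have := deg_le_maxdeg e v.
  by rewrite /deg in ltv *; lia.
have [y evy yS] := cover v (introT (maxdeg_verticesP e v) degv).
have /proper_card : [set u | del_edges e S v u] \proper [set u | e v u].
  by apply/properP; split=> //; exists y; rewrite !inE /del_edges ?yS ?andbF.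
by rewrite /deg in degv *; lia.
Qed.

Lemma es_Delta_le S : mitigating e S -> es_Delta e <= #|S|.
Proof. by move=> mS; have := bigmin_le_cond #|edges e| (fun S : {set {set T}} => #|S|) mS. Qed.

Lemma es_Delta_gt0 x y : e x y -> 0 < es_Delta e.
Proof.
move=> exy; rewrite /es_Delta -minEnat; apply: (le_bigmin (T := nat)) => [|S /andP [_]].
  by apply/card_gt0P; exists [set x; y]; apply: mem_edges.
apply: contraTT; rewrite -leqNgt leqn0 cards_eq0 => /eqP ->.
have -> : maxdeg (del_edges e set0) = maxdeg e.
  by apply: eq_bigr => v _; apply: eq_card => u; rewrite !inE /del_edges inE andbT.
by have := maxdeg_gt0 exy; rewrite -ltnNge; lia.
Qed.

Lemma independentP (A : {set T}) :
  reflect {in A &, forall x y, ~~ e x y} (independent e A).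
Proof.
apply: (iffP forall_inP) => [indA x y xA yA|indA x xA].
  exact: forall_inP (indA x xA) y yA.
by apply/forall_inP=> y yA; apply: indA.
Qed.

Lemma alpha_witness : exists2 A, independent e A & alpha e = #|A|.
Proof.
have indep0 : independent e set0 by apply/independentP=> x; rewrite inE.
have /(eq_bigmax_cond (fun A : {set T} => #|A|)) [A indA maxA] : 0 < #|independent e|.
  by apply/card_gt0P; exists set0.
by exists A.
Qed.
End Mitigating.

Section IndependenceBound.
Variables (T : finType) (e : rel T).
Hypothesis e_sym : symmetric e.

Lemma mitigating_outside_independent (A : {set T}) : 0 < maxdeg e ->
  independent e A -> exists2 S, mitigating e S & #|S| <= #|T| - #|A|.
Proof.
move=> D_gt0 /independentP indA.
pose M := maxdeg_vertices e; pose U := A :&: M.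
have [f [f_inj f_edge]] : exists f, {in U &, injective f} /\ {in U, forall u, e u (f u)}.
  by apply: maxdeg_saturating; rewrite // subsetIr.
pose R := M :\: A :\: f @: U.
have [g g_edge] : exists g, {in R, forall v, e v (g v)}.
  exists (fun v => odflt v [pick y | e v y]) => v /setDP [/setDP [/maxdeg_verticesP degv _] _].
  have /card_gt0P [y] : 0 < deg e v by rewrite degv.
  by rewrite inE; case: pickP => [y' ->|/(_ y) ->].
exists ([set [set u; f u] | u in U] :|: [set [set v; g v] | v in R]).
  apply: mitigating_cover => [|m mM].
    by apply/subsetP=> _ /setUP [] /imsetP [v vUR ->]; apply: mem_edges; auto.
  have [mA|mNA] := boolP (m \in A).
    by exists (f m); [|apply/setUP; left; apply: imset_f]; rewrite ?f_edge // inE mA.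
  have [/imsetP [u uU ->]|mNf] := boolP (m \in f @: U).
    exists u; first by rewrite e_sym f_edge.
    by apply/setUP; left; apply/imsetP; exists u; rewrite // setUC.
  have mR : m \in R by rewrite !in_setD mNf mNA.
  by exists (g m); [apply: g_edge | apply/setUP; right; apply: imset_f].
have fU_A : [disjoint f @: U & A].
  rewrite disjoint_sym; apply/pred0P=> x /=; apply/andP=> [[xA /imsetP [u uU xf]]].
  by move: (f_edge u uU); rewrite -xf (negbTE (indA u x _ xA)) // (subsetP (subsetIl A M)).
have sub : f @: U :|: R \subset ~: A.
  by rewrite subUset -disjoints_subset fU_A; apply/subsetP=> x; rewrite !inE => /and3P [_ ->].
have dfR : [disjoint f @: U & R].
  by rewrite disjoints_subset; apply/subsetP=> x; rewrite !inE => ->.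
apply: leq_trans (leq_card_setU _ _) _.
apply: leq_trans (leq_add (leq_imset_card _ _) (leq_imset_card _ _)) _.
have := subset_leq_card sub; have := cardsC A.
by rewrite cardsU (disjoint_setI0 dfR) cards0 (card_in_imset f_inj); lia.
Qed.

Lemma es_Delta_le_sub_alpha x y : e x y -> es_Delta e <= #|T| - alpha e.
Proof.
move=> exy; have [A indA ->] := alpha_witness e.
have [S mS leS] := mitigating_outside_independent (maxdeg_gt0 exy) indA.
exact: leq_trans (es_Delta_le mS) leS.
Qed.
End IndependenceBound.

Section PathComponents.
Variables (T : finType) (S : {set {set T}}).
Local Notation adj := (sadj S).

Lemma sadj_sym : symmetric adj.
Proof. by move=> x y; rewrite /sadj eq_sym setUC. Qed.

Lemma sadj_irr : irreflexive adj.
Proof. by move=> x; rewrite /sadj eqxx. Qed.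

Lemma sadj_neq x y : adj x y -> x != y.
Proof. by apply: contraTneq => ->; rewrite sadj_irr. Qed.

Lemma scomp_eq (C : {set T}) x : x \in C ->
  (forall y z, y \in C -> adj y z -> z \in C) ->
  (forall y, y \in C -> connect adj x y) -> scomp S x = C.
Proof.
move=> xC closedC connC; apply/setP=> y; rewrite inE.
have clC : closed adj C.
  move=> y1 y2 a12; apply/idP/idP => [/closedC -> //|/closedC]; apply.
  by rewrite sadj_sym.
by apply/idP/idP => [cxy|/connC //]; rewrite -(closed_connect clC cxy).
Qed.

Lemma iso_path_seq (s : seq T) x0 : uniq s ->
  (forall i j, i < size s -> j < size s ->
     adj (nth x0 s i) (nth x0 s j) = (i.+1 == j) || (j.+1 == i)) ->
  (forall y z, y \in s -> adj y z -> z \in s) ->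
  forall x, x \in s -> iso_path S (scomp S x) (size s).
Proof.
move=> s_uniq adj_s closed_s x xs.
have conn0 i : i < size s -> connect adj (nth x0 s 0) (nth x0 s i).
  elim: i => [|i IH] lti; first exact: connect0.
  apply: connect_trans (IH (ltnW lti)) (connect1 _).
  by rewrite adj_s ?eqxx // ltnW.
have conn y z : y \in s -> z \in s -> connect adj y z.
  move=> ys zs; rewrite -(nth_index x0 ys) -(nth_index x0 zs).
  apply: connect_trans (conn0 _ _); last by rewrite index_mem.
  by rewrite (sym_connect_sym sadj_sym) conn0 ?index_mem.
exists (fun i : 'I_(size s) => nth x0 s i); split; [|split].
- by move=> i j /eqP; rewrite nth_uniq // => /eqP /val_inj.
- rewrite (@scomp_eq [set y in s]) ?inE //; last by move=> y; rewrite inE; apply: conn.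
    apply/setP=> y; rewrite inE; apply/imsetP/idP => [[i _ ->]|ys]; first exact: mem_nth.
    have lt_ys : index y s < size s by rewrite index_mem.
    by exists (Ordinal lt_ys); rewrite ?inE //= nth_index.
  by move=> y z; rewrite !inE; apply: closed_s.
- by move=> i j; rewrite adj_s.
Qed.

Lemma iso_path2 u v : adj u v ->
  (forall z, adj u z -> z = v) -> (forall z, adj v z -> z = u) ->
  forall x, x \in [:: u; v] -> iso_path S (scomp S x) 2.
Proof.
move=> auv hu hv; apply: (iso_path_seq (x0 := u)).
- by rewrite /= inE andbT sadj_neq.
- by case=> [|[|//]] [|[|//]] //= _ _; rewrite ?sadj_irr // sadj_sym.
- by move=> y z; rewrite !inE => /orP [] /eqP -> => [/hu|/hv] ->; rewrite eqxx ?orbT.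
Qed.

Lemma iso_path3 u v w : adj u v -> adj v w -> u != w ->
  (forall z, adj u z -> z = v) -> (forall z, adj w z -> z = v) ->
  (forall z, adj v z -> z = u \/ z = w) ->
  forall x, x \in [:: u; v; w] -> iso_path S (scomp S x) 3.
Proof.
move=> auv avw uw hu hw hv.
have auw : adj u w = false by apply/negP => /hu wv; move: avw; rewrite wv sadj_irr.
apply: (iso_path_seq (x0 := u)).
- by rewrite /= !inE negb_or uw !sadj_neq.
- by case=> [|[|[|//]]] [|[|[|//]]] //= _ _; rewrite ?sadj_irr // sadj_sym.
- move=> y z; rewrite !inE => /or3P [] /eqP -> => [/hu|/hv|/hw].
  + by move=> ->; rewrite eqxx orbT.
  + by case=> ->; rewrite eqxx ?orbT.
  + by move=> ->; rewrite eqxx orbT.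
Qed.

Lemma sole_nbr_or_cherry x y :
  (forall t, adj x t -> t = y) \/ exists2 z, adj x z & z != y.
Proof.
have [z /andP [axz zy]|no_z] := pickP [pred z | adj x z && (z != y)].
  by right; exists z.
by left; move=> t axt; move: (no_z t) => /=; rewrite axt /= => /negbFE /eqP.
Qed.

Lemma scomp_path2_path3 :
  (forall v y z, adj v y -> adj v z -> y != z ->
    [/\ (forall t, adj y t -> t = v), (forall t, adj z t -> t = v) &
        (forall t, adj v t -> t = y \/ t = z)]) ->
  forall x, x \in svert S -> iso_path S (scomp S x) 2 \/ iso_path S (scomp S x) 3.
Proof.
move=> cherry x /[!inE] /existsP [y axy].
have ayx : adj y x by rewrite sadj_sym.
have [x_leaf|[z axz zy]] := sole_nbr_or_cherry x y; last first.
  rewrite eq_sym in zy; have [hy hz hx] := cherry x y z axy axz zy.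
  by right; apply: (iso_path3 ayx axz) => //; rewrite !inE eqxx orbT.
have [y_leaf|[z ayz zx]] := sole_nbr_or_cherry y x.
  by left; apply: iso_path2 axy x_leaf y_leaf _ _; rewrite inE eqxx.
rewrite eq_sym in zx; have [hx hz hy] := cherry y x z ayx ayz zx.
by right; apply: (iso_path3 axy ayz) => //; rewrite inE eqxx.
Qed.
End PathComponents.

Section MaximalMatching.
Variables (T : finType) (e : rel T).
Hypotheses (e_sym : symmetric e) (e_irr : irreflexive e).

(* A matching of [G[M]] is encoded by its vertex set [D] and the partner map [p],
   a fixed-point-free involution of [D]. *)
Definition matching_in (M D : {set T}) (p : {ffun T -> T}) : bool :=
  (D \subset M) &&
  [forall x in D, [&& p x \in D, p x != x, p (p x) == x & e x (p x)]].

Lemma maximal_matching (M : {set T}) : exists (D : {set T}) (p : T -> T),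
  [/\ D \subset M,
      {in D, forall x, [/\ p x \in D, p x != x, p (p x) = x & e x (p x)]} &
      {in M :\: D &, forall x y, ~~ e x y}].
Proof.
have match0 : matching_in M set0 [ffun x => x].
  by rewrite /matching_in sub0set; apply/forall_inP=> x; rewrite inE.
have [[D p] /= /andP [sDM /forall_inP pD] D_max] :=
  @arg_maxnP _ (set0, [ffun x => x]) (fun q => matching_in M q.1 q.2) (fun q => #|q.1|) match0.
exists D, p; split=> // [x /pD /and4P [-> -> /eqP -> ->] //|x y].
rewrite !inE => /andP [xD xM] /andP [yD yM]; apply/negP=> exy.
have xy : x != y by apply: contraTneq exy => ->; rewrite e_irr.
pose p' := [ffun z => if z == x then y else if z == y then x else p z].
have : matching_in M (x |: (y |: D)) p'.
  rewrite /matching_in !subUset !sub1set xM yM sDM /=.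
  apply/forall_inP=> z; rewrite !inE !ffunE.
  have yx : (y == x) = false by rewrite eq_sym (negbTE xy).
  have [->|zx] := eqVneq z x; first by rewrite yx /= !eqxx exy ?orbT.
  have [->|zy] := eqVneq z y; first by rewrite /= !eqxx (negbTE xy) e_sym exy ?orbT.
  move=> /= zD; case/and4P: (pD z zD) => pzD pzz /eqP ppz ez.
  have pzx : p z != x by apply: contraNneq xD => <-.
  have pzy : p z != y by apply: contraNneq yD => <-.
  by rewrite (negbTE pzx) (negbTE pzy) pzD ppz pzz ez eqxx !orbT.
move=> /(D_max (x |: (y |: D), p')) /=.
by rewrite !cardsU1 !inE (negbTE xD) (negbTE yD) (negbTE xy); lia.
Qed.
End MaximalMatching.

Lemma set2_eq (T : finType) (a b c d : T) : a != b -> [set a; b] = [set c; d] ->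
  (c = a /\ d = b) \/ (c = b /\ d = a).
Proof.
move=> ab h; have : a \in [set c; d] by rewrite -h set21.
have : b \in [set c; d] by rewrite -h set22.
rewrite !inE => /orP [] /eqP bcd /orP [] /eqP acd; subst.
- by rewrite eqxx in ab.
- by right.
- by left.
- by rewrite eqxx in ab.
Qed.

Section PathCover.
Variables (T : finType) (e : rel T).
Hypothesis e_sym : symmetric e.
Variables (D : {set T}) (p f : T -> T).
Hypothesis p_matching :
  {in D, forall x, [/\ p x \in D, p x != x, p (p x) = x & e x (p x)]}.
Let U := maxdeg_vertices e :\: D.
Hypothesis U_indep : {in U &, forall x y, ~~ e x y}.
Hypothesis f_inj : {in U &, injective f}.
Hypothesis f_edge : {in U, forall u, e u (f u)}.

(* A matching edge whose two ends are both hit by [f] would be the middle edge of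
   a path with three edges; it is dropped, leaving two copies of [P_2]. *)
Definition pair_kept x := ~~ ((x \in f @: U) && (p x \in f @: U)).

Definition path_cover : {set {set T}} :=
  [set [set u; f u] | u in U] :|: [set [set x; p x] | x in [set x in D | pair_kept x]].

Local Notation adj := (sadj path_cover).

Lemma U_notin_D u : u \in U -> u \notin D.
Proof. by case/setDP. Qed.

Lemma f_notin_U u : u \in U -> f u \notin U.
Proof. by move=> uU; apply: contraTN (f_edge uU) => /(U_indep uU). Qed.

Lemma pair_kept_p x : x \in D -> pair_kept (p x) = pair_kept x.
Proof. by case/p_matching=> _ _ ppx _; rewrite /pair_kept ppx andbC. Qed.

Lemma adj_path_cover a b : adj a b ->
  [\/ a \in U /\ b = f a, b \in U /\ a = f b | [/\ a \in D, b = p a & pair_kept a]].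
Proof.
case/andP=> ab /setUP [] /imsetP [u uK h]; have [[<- <-]|[<- <-]] := set2_eq ab h.
- by constructor 1.
- by constructor 2.
- by move: uK; rewrite inE => /andP [uD ku]; constructor 3.
move: uK; rewrite inE => /andP [uD ku]; have [pD _ ppu _] := p_matching uD.
by constructor 3; rewrite ?ppu ?pair_kept_p.
Qed.

Lemma adj_U u t : u \in U -> adj u t -> t = f u.
Proof.
move=> uU /adj_path_cover [] [] // => [tU uf|uD].
  by move: (f_notin_U tU); rewrite -uf uU.
by move: (U_notin_D uU); rewrite uD.
Qed.

Lemma adj_notin_U v t : v \notin U -> adj v t ->
  (t \in U /\ f t = v) \/ [/\ v \in D, t = p v & pair_kept v].
Proof.
move=> vU /adj_path_cover [[vU' _]|[tU ->]|]; [by rewrite vU' in vU|by left|by right].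
Qed.

Lemma adj_partner v t : v \in D -> pair_kept v -> v \in f @: U -> adj (p v) t -> t = v.
Proof.
move=> vD kv vfU; have [pD _ ppv _] := p_matching vD.
case/adj_path_cover => [[pU _]|[tU pf]|[_ -> _] //].
  by move: (U_notin_D pU); rewrite pD.
by move: kv; rewrite /pair_kept vfU pf imset_f.
Qed.

Lemma path_cover_cherry v y z : adj v y -> adj v z -> y != z ->
  [/\ (forall t, adj y t -> t = v), (forall t, adj z t -> t = v) &
      (forall t, adj v t -> t = y \/ t = z)].
Proof.
move=> avy avz yz.
have vU : v \notin U.
  by apply: contra yz => vU; rewrite (adj_U vU avy) (adj_U vU avz).
wlog [yU fyv] : y z avy avz yz / y \in U /\ f y = v.
  move=> wlog_yU; have [yfv|[vD yp _]] := adj_notin_U vU avy; first exact: wlog_yU.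
  have [zfv|[_ zp _]] := adj_notin_U vU avz; last by rewrite yp zp eqxx in yz.
  rewrite eq_sym in yz; have [hz hy hv] := wlog_yU z y avz avy yz zfv.
  by split=> // t /hv [] ->; [right|left].
have [[zU fzv]|[vD -> kv]] := adj_notin_U vU avz.
  by rewrite (f_inj yU zU) ?fyv ?fzv ?eqxx in yz.
split=> [t /(adj_U yU) -> //|t|t].
  by apply: adj_partner; rewrite // -fyv imset_f.
case/(adj_notin_U vU) => [[tU ftv]|[_ -> _]]; last by right.
by left; apply: f_inj; rewrite ?ftv.
Qed.

Lemma path_cover_mitigating : mitigating e path_cover.
Proof.
apply: mitigating_cover => [|m mM].
  apply/subsetP=> _ /setUP [] /imsetP [x xUD ->]; apply: mem_edges; first exact: f_edge.
  by move: xUD; rewrite inE => /andP [/p_matching []].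
have [mU|mNU] := boolP (m \in U).
  by exists (f m); [apply: f_edge | apply/setUP; left; apply: imset_f].
have mD : m \in D by move: mNU; rewrite in_setD mM andbT negbK.
have [km|] := boolP (pair_kept m).
  exists (p m); first by case: (p_matching mD).
  by apply/setUP; right; apply: imset_f; rewrite inE mD.
rewrite negbK => /andP [/imsetP [u uU ->] _].
exists u; first by rewrite e_sym f_edge.
by apply/setUP; left; apply/imsetP; exists u; rewrite // setUC.
Qed.

Lemma path_cover_components x : x \in svert path_cover ->
  iso_path path_cover (scomp path_cover x) 2 \/ iso_path path_cover (scomp path_cover x) 3.
Proof. exact: scomp_path2_path3 path_cover_cherry x. Qed.
End PathCover.

Lemma exists_path_mitigating_set (T : finType) (e : rel T) x y :
  simple_graph e -> e x y ->
  exists S : {set {set T}}, mitigating e S /\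
    forall z, z \in svert S -> iso_path S (scomp S z) 2 \/ iso_path S (scomp S z) 3.
Proof.
move=> [e_sym e_irr] exy.
have [D [p [_ p_matching U_indep]]] := maximal_matching e_sym e_irr (maxdeg_vertices e).
have [f [f_inj f_edge]] := maxdeg_saturating e_sym (maxdeg_gt0 exy) (subsetDl _ D).
exists (path_cover e D p f); split; first exact: path_cover_mitigating.
exact: path_cover_components.
Qed.

Definition K2 : rel bool := fun x y => x != y.

Lemma K2_simple : simple_graph K2.
Proof. by split=> [x y|x]; rewrite /K2 ?eqxx // eq_sym. Qed.

Lemma alpha_K2 : alpha K2 = 1.
Proof.
apply/eqP; rewrite eqn_leq; apply/andP; split.
  apply/bigmax_leqP => A /independentP indA; rewrite leqNgt.
  by apply/card_gt1P => [[x [y [xA yA xy]]]]; move: (indA x y xA yA); rewrite /K2 xy.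
have indep1 : independent K2 [set true] by apply/independentP=> x y /set1P -> /set1P ->.
by have := leq_bigmax_cond (F := fun A : {set bool} => #|A|) _ indep1; rewrite cards1.
Qed.

Lemma es_Delta_K2 : es_Delta K2 = #|{: bool}| - alpha K2.
Proof.
have [K2_sym _] := K2_simple.
apply/eqP; rewrite eqn_leq (@es_Delta_le_sub_alpha _ K2 K2_sym true false) //=.
by rewrite card_bool alpha_K2; apply: (@es_Delta_gt0 _ K2 true false).
Qed.

Theorem theorem2p1 (T : finType) (e : rel T) :
  simple_graph e -> (exists x y, e x y) ->
  (* (i) *)
  (exists S : {set {set T}}, mitigating e S /\
     forall x, x \in svert S ->
       iso_path S (scomp S x) 2 \/ iso_path S (scomp S x) 3) /\
  (* (ii) bound *)
  es_Delta e <= #|T| - alpha e /\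
  (* (ii) sharpness *)
  (exists (T' : finType) (e' : rel T'),
     simple_graph e' /\ (exists x y, e' x y) /\
     es_Delta e' = #|T'| - alpha e').
Proof.
move=> simple_e [x [y exy]]; split; first exact: exists_path_mitigating_set simple_e exy.
split; first by case: simple_e => e_sym _; apply: es_Delta_le_sub_alpha exy.
exists bool, K2; split; first exact: K2_simple.
by split; [exists true, false | exact: es_Delta_K2].
Qed.
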